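(* Let $A,B\in\mathbb{R}^{n\times n}$ be two rank-one positive semi-definite matrices and let $C=A-B$. Then $c:=2\,\mathrm{tr}[C^2]-(\mathrm{tr}[C])^2\ge 0$, with $c=0$ if and only if $A=B$. *)

From mathcomp Require Import all_boot all_order all_algebra.
Set Implicit Arguments. Unset Strict Implicit. Unset Printing Implicit Defensive.
Import Order.TTheory GRing.Theory Num.Theory.
Local Open Scope ring_scope.

Definition psd (R : realFieldType) (n : nat) (A : 'M[R]_n) : Prop :=
  A^T = A /\ forall x : 'cV[R]_n, 0 <= (x^T *m A *m x) 0 0.

(* A rank-one matrix satisfies [A *m A = \tr A *: A].  Writing [p = \tr A],
   [q = \tr B] and [m = \tr (A *m B)], this gives [\tr (C *m C) =
   p^2 + q^2 - 2 m] and [c = (p - q)^2 + 4 (p q - m)].  The Cauchy-Schwarz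
   inequality for the Frobenius inner product bounds [m^2] by
   [\tr (A *m A) * \tr (B *m B) = (p q)^2], so [m <= p q] since [p, q >= 0];
   hence [c >= 0].  If [c = 0] then [p = q] and [m = p q], so
   [\tr (C^T *m C) = \tr (C *m C) = 0], which forces [C = 0]. *)

From mathcomp Require Import all_boot all_order all_algebra.
From mathcomp Require Import ring lra.

Set Implicit Arguments.
Unset Strict Implicit.
Unset Printing Implicit Defensive.

Import Order.TTheory GRing.Theory Num.Theory.
Local Open Scope ring_scope.

Lemma rank1_col_mul_row (F : fieldType) m n (A : 'M[F]_(m, n)) :
  \rank A = 1%N -> exists (u : 'cV_m) (v : 'rV_n), A = u *m v.
Proof.
move=> rA; exists (col_ebase A *m pid_mx 1), (pid_mx 1 *m row_ebase A).
rewrite -mulmxA (mulmxA (pid_mx 1)) mul_pid_mx mulmxA.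
by rewrite -[in LHS](mulmx_ebase A) rA.
Qed.

Lemma mulmx_col_row_sqr (R : comPzRingType) n (u : 'cV[R]_n) (v : 'rV[R]_n) :
  (u *m v) *m (u *m v) = \tr (u *m v) *: (u *m v).
Proof.
by rewrite mulmxA -(mulmxA u) [v *m u]mx11_scalar mul_mx_scalar -scalemxAl
  mxtrace_mulC trace_mx11.
Qed.

Lemma mxtrace_sqr_rank1 (F : fieldType) n (A : 'M[F]_n) :
  \rank A = 1%N -> \tr (A *m A) = \tr A ^+ 2.
Proof.
by case/rank1_col_mul_row=> u [v ->]; rewrite mulmx_col_row_sqr mxtraceZ expr2.
Qed.

Lemma mxtrace_trmx_mul (R : comPzRingType) m n (A : 'M[R]_(m, n)) :
  \tr (A^T *m A) = \sum_j \sum_i A i j ^+ 2.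
Proof.
by apply: eq_bigr => j _; rewrite mxE; apply: eq_bigr => i _; rewrite mxE expr2.
Qed.

Section Frobenius.
Variables (R : realDomainType) (m n : nat).
Implicit Types A B : 'M[R]_(m, n).

Lemma mxtrace_trmx_mul_ge0 A : 0 <= \tr (A^T *m A).
Proof.
by rewrite mxtrace_trmx_mul; apply: sumr_ge0 => j _; apply: sumr_ge0 => i _;
  apply: sqr_ge0.
Qed.

Lemma mxtrace_trmx_mul_eq0 A : (\tr (A^T *m A) == 0) = (A == 0).
Proof.
apply/eqP/eqP=> [|->]; last by rewrite mulmx0 mxtrace0.
have sqr_sum_ge0 j : 0 <= \sum_i A i j ^+ 2.
  by apply: sumr_ge0 => i _; apply: sqr_ge0.
rewrite mxtrace_trmx_mul => /psumr_eq0P A0; apply/matrixP=> i j; apply/eqP.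
have /psumr_eq0P Aj0 := A0 (fun j _ => sqr_sum_ge0 j) j isT.
by rewrite mxE -sqrf_eq0 Aj0 // => k _; apply: sqr_ge0.
Qed.

Lemma mxtrace_trmx_mulC A B : \tr (B^T *m A) = \tr (A^T *m B).
Proof. by rewrite -mxtrace_tr trmx_mul trmxK. Qed.

Lemma mxtrace_CauchySchwarz A B :
  \tr (A^T *m B) ^+ 2 <= \tr (A^T *m A) * \tr (B^T *m B).
Proof.
have [a_gt0|] := ltP 0 (\tr (A^T *m A)); last first.
  rewrite le_eqVlt ltNge mxtrace_trmx_mul_ge0 orbF mxtrace_trmx_mul_eq0.
  by move/eqP->; rewrite trmx0 !mul0mx mxtrace0 expr0n mul0r.
set a := \tr (A^T *m A) in a_gt0 *.
set b := \tr (B^T *m B); set s := \tr (A^T *m B).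
have := mxtrace_trmx_mul_ge0 (s *: A - a *: B).
have -> : \tr ((s *: A - a *: B)^T *m (s *: A - a *: B)) = a * (a * b - s ^+ 2).
  rewrite [(_ - _)^T]linearB /= ![(_ *: _)^T]linearZ /= !(mulmxBl, mulmxBr).
  rewrite -!scalemxAl -!scalemxAr !raddfB /= !mxtraceZ (mxtrace_trmx_mulC A B).
  rewrite -/a -/b -/s; ring.
by rewrite pmulr_rge0 ?subr_ge0.
Qed.

End Frobenius.

Lemma psd_mxtrace_ge0 (R : realFieldType) n (A : 'M[R]_n) : psd A -> 0 <= \tr A.
Proof.
move=> [_ A_ge0]; apply: sumr_ge0 => i _.
by have := A_ge0 (delta_mx i 0); rewrite trmx_delta -rowE -colE !mxE.
Qed.

Lemma psd_rank1_mxtrace_mul_le (R : realFieldType) n (A B : 'M[R]_n) :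
  psd A -> \rank A = 1%N -> psd B -> \rank B = 1%N ->
  \tr (A *m B) <= \tr A * \tr B.
Proof.
move=> psdA rA psdB rB; have [[sA _] [sB _]] := (psdA, psdB).
have pq_ge0 : 0 <= \tr A * \tr B by rewrite mulr_ge0 ?psd_mxtrace_ge0.
have := mxtrace_CauchySchwarz A B.
rewrite sA sB !mxtrace_sqr_rank1 // -exprMn; nra.
Qed.

Theorem proposition1 (R : realFieldType) (n : nat) (A B : 'M[R]_n) :
  psd A -> \rank A = 1%N -> psd B -> \rank B = 1%N ->
  let C := A - B in
  let c := 2 * \tr (C *m C) - (\tr C) ^+ 2 in
  0 <= c /\ (c = 0 <-> A = B).
Proof.
move=> psdA rA psdB rB C c; have [[sA _] [sB _]] := (psdA, psdB).
have AB_le := psd_rank1_mxtrace_mul_le psdA rA psdB rB.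
have trCC : \tr (C *m C) = \tr A ^+ 2 + \tr B ^+ 2 - 2 * \tr (A *m B).
  rewrite mulmxBl !mulmxBr !raddfB /= !mxtrace_sqr_rank1 // (mxtrace_mulC B A).
  ring.
have c_eq : c = (\tr A - \tr B) ^+ 2 + 4 * (\tr A * \tr B - \tr (A *m B)).
  by rewrite /c trCC raddfB; ring.
split; first by rewrite c_eq addr_ge0 ?sqr_ge0 ?mulr_ge0 ?subr_ge0.
split=> [|AB]; last by rewrite /c /C AB subrr mul0mx mxtrace0; ring.
rewrite c_eq => c0; apply/eqP; rewrite -subr_eq0 -mxtrace_trmx_mul_eq0 -/C.
have -> : C^T = C by rewrite linearB /= sA sB.
rewrite trCC; apply/eqP; have := sqr_ge0 (\tr A - \tr B); nra.
Qed.
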